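(* Let $\Phi$ be a 2-CNF, and let $\Psi$ be obtained from $\Phi$ by adding a single clause $e$ on the same variable set. Then $$\big|\log Z(\hat\Phi)-\log Z(\hat\Psi)\big|\le|\mathcal N(\Phi,e)|\log 2.$$
   Context: A 2-CNF is a conjunction of clauses, each the disjunction of two literals on two distinct variables. $Z(\cdot)$ is the number of satisfying assignments. **Unit Clause Propagation.** For a 2-CNF $\Phi$ and a set $\mathcal L_0$ of literals, $\mathcal L(\Phi,\mathcal L_0)$ is the closure of $\mathcal L_0$ under: if $\Phi$ has a clause $l\vee\neg l'$ with $l'\in\mathcal L$, add $l$. **Pruning.** Conflict clauses $\mathcal C(\Phi,\mathcal L_0)$ are the clauses of $\Phi$ both of whose variables $x$ satisfy $x,\neg x\in\mathcal L(\Phi,\mathcal L_0)$. The pruned formula $\hat\Phi$ is $\Phi$ with all clauses of $\bigcup_l\mathcal C(\Phi,\{l\})$ removed, $l$ ranging over all literals. Pruned formulas are satisfiable. **The set $\mathcal N(\Phi,e)$.** For a variable $v$, $\mathcal N(\Phi,v)$ is the set of literals $l$ with $\{v,\neg v\}\cap\mathcal L(\Phi,\{l\})\ne\emptyset$. If $v,v'$ are the two variables of $e$, then $$\mathcal N(\Phi,e)=\bigcup_{l\in\mathcal N(\Phi,v)\cup\mathcal N(\Phi,v')}\mathcal L(\Phi,\{l\}),$$ a set of literals. *)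

From mathcomp Require Import all_boot.
From Stdlib Require Import Reals.
Set Implicit Arguments. Unset Strict Implicit. Unset Printing Implicit Defensive.

Section TwoCNF.
Variable n : nat.

(* A literal on variables 'I_n: (x, true) is x, (x, false) is ~x. *)
Definition lit := ('I_n * bool)%type.
Definition neg (l : lit) : lit := (l.1, ~~ l.2).

Definition clause := (lit * lit)%type.
Definition wf_clause (c : clause) : bool := c.1.1 != c.2.1.
Definition is2CNF (Phi : seq clause) : bool := all wf_clause Phi.

Definition lit_sat (s : {ffun 'I_n -> bool}) (l : lit) : bool := s l.1 == l.2.
Definition clause_sat s (c : clause) : bool := lit_sat s c.1 || lit_sat s c.2.
Definition Zcount (Phi : seq clause) : nat :=
  #|[set s : {ffun 'I_n -> bool} | all (clause_sat s) Phi]|.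

(* Phi has a clause  l \/ ~l'  (clauses are unordered disjunctions). *)
Definition has_clause (Phi : seq clause) (l l' : lit) : bool :=
  has (fun c => (c == (l, neg l')) || (c == (neg l', l))) Phi.

Definition up_closed (Phi : seq clause) (S : {set lit}) : bool :=
  [forall l, forall l', ((l' \in S) && has_clause Phi l l') ==> (l \in S)].

Definition UP (Phi : seq clause) (L0 : {set lit}) : {set lit} :=
  \bigcap_(S : {set lit} | (L0 \subset S) && up_closed Phi S) S.

Definition conflict_var (L : {set lit}) (x : 'I_n) : bool :=
  ((x, true) \in L) && ((x, false) \in L).

(* c is in C(Phi, L0) (membership of c in Phi checked separately) *)
Definition conflict_clause (Phi : seq clause) (L0 : {set lit}) (c : clause) : bool :=
  conflict_var (UP Phi L0) c.1.1 && conflict_var (UP Phi L0) c.2.1.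

(* hat Phi: remove every clause lying in some C(Phi, {l}). *)
Definition prune (Phi : seq clause) : seq clause :=
  [seq c <- Phi | ~~ [exists l : lit, conflict_clause Phi [set l] c]].

Definition Nvar (Phi : seq clause) (v : 'I_n) : {set lit} :=
  [set l : lit | ((v, true) \in UP Phi [set l]) || ((v, false) \in UP Phi [set l])].

Definition Nclause (Phi : seq clause) (e : clause) : {set lit} :=
  \bigcup_(l in Nvar Phi e.1.1 :|: Nvar Phi e.2.1) UP Phi [set l].

End TwoCNF.

(* Pruned formulas are satisfiable: propagation from one literal in a pruned formula never
   yields a complementary pair, so its closure can be forced and the clauses it does not
   touch handled recursively.
   Let N = N(Phi, e).  It is closed under propagation in Phi and in Psi = e :: Phi, and a
   clause of one pruned formula avoiding the variables of N lies in the other.  Fix a model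
   r of one pruned formula; send a model s of the other to the assignment that follows r on
   variables with both literals in N, makes the literal of N true on variables with one
   literal in N, and follows s elsewhere.  Together with the values of s on the variables
   of N this is injective, so each of the two counts is at most 2^|N| times the other. *)

From Pilot Require Import Defs.
From mathcomp Require Import all_boot.
From Stdlib Require Import Reals Lra.
(* The reals shadow [^] on [nat] (by [Nat.pow]) and [neg] (by [RIneq.neg]). *)
From mathcomp Require Import ssrnat.

Set Implicit Arguments. Unset Strict Implicit. Unset Printing Implicit Defensive.

Local Notation neg := Defs.neg.

Section TwoCNF.
Variable n : nat.
Implicit Types (Phi G : seq (clause n)) (l m : lit n) (L U : {set lit n}) (v : 'I_n)
  (r s : {ffun 'I_n -> bool}).

Lemma negK : involutive (@neg n).
Proof. by case=> v b; rewrite /neg /= negbK. Qed.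

Lemma neg_neq l : neg l != l.
Proof. by case: l => v []; rewrite /neg xpair_eqE eqxx. Qed.

Lemma up_closedP Phi U :
  reflect (forall l l', l' \in U -> has_clause Phi l l' -> l \in U) (up_closed Phi U).
Proof.
apply: (iffP forallP) => [closedU l l' hl' hc | closedU l].
  by have /forallP/(_ l')/implyP := closedU l; apply; rewrite hl' hc.
by apply/forallP => l'; apply/implyP => /andP[]; apply: closedU.
Qed.

Lemma has_clause_sub G Phi l l' :
  {subset G <= Phi} -> has_clause G l l' -> has_clause Phi l l'.
Proof. by move=> sGPhi /hasP[c cG hc]; apply/hasP; exists c; first exact: sGPhi. Qed.

Lemma has_clause_contra Phi l l' : has_clause Phi l l' -> has_clause Phi (neg l') (neg l).
Proof.
move=> /hasP[c cPhi hc]; apply/hasP; exists c => //; rewrite !negK.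
by case/orP: hc => /eqP ->; rewrite eqxx ?orbT.
Qed.

Lemma up_closed_sub G Phi U : {subset G <= Phi} -> up_closed Phi U -> up_closed G U.
Proof.
move=> sGPhi /up_closedP closedU; apply/up_closedP => l l' hl' hc.
exact: closedU hl' (has_clause_sub sGPhi hc).
Qed.

Lemma sub_UP Phi L : L \subset UP Phi L.
Proof. by apply/bigcapsP => S /andP[]. Qed.

Lemma UP_min Phi L U : L \subset U -> up_closed Phi U -> UP Phi L \subset U.
Proof. by move=> sLU closedU; apply: bigcap_inf; rewrite sLU. Qed.

Lemma UP_closed Phi L : up_closed Phi (UP Phi L).
Proof.
apply/up_closedP => l l' /bigcapP hl' hc; apply/bigcapP => S hS.
by have /andP[_ /up_closedP closedS] := hS; apply: closedS (hl' S hS) hc.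
Qed.

Lemma UP_step Phi L l l' :
  l' \in UP Phi L -> has_clause Phi l l' -> l \in UP Phi L.
Proof. exact: (up_closedP _ _ (UP_closed Phi L)). Qed.

Lemma mem_UP1 Phi l : l \in UP Phi [set l].
Proof. by apply: (subsetP (sub_UP Phi [set l])); rewrite set11. Qed.

Lemma UP1_trans Phi l m : m \in UP Phi [set l] -> UP Phi [set m] \subset UP Phi [set l].
Proof. by move=> hm; apply: UP_min (UP_closed _ _); rewrite sub1set. Qed.

Lemma UP_sub_cnf G Phi L : {subset G <= Phi} -> UP G L \subset UP Phi L.
Proof.
move=> sGPhi; apply: UP_min (sub_UP _ _) _.
exact: up_closed_sub sGPhi (UP_closed Phi L).
Qed.

Lemma UP1_contra Phi l m : m \in UP Phi [set l] -> neg l \in UP Phi [set neg m].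
Proof.
move=> hm; suff : UP Phi [set l] \subset [set m | neg l \in UP Phi [set neg m]].
  by move/subsetP/(_ m hm); rewrite inE.
apply: UP_min; first by rewrite sub1set inE mem_UP1.
apply/up_closedP => a a'; rewrite !inE => ha' hc.
apply: (subsetP (UP1_trans _)) ha'.
exact: UP_step (mem_UP1 Phi (neg a)) (has_clause_contra hc).
Qed.

Lemma UP1_first_step Phi l m :
  m \in UP Phi [set l] -> m != l -> exists2 l', has_clause Phi l' l & m \in UP Phi [set l'].
Proof.
move=> hm; suff : UP Phi [set l] \subset l |: \bigcup_(l' | has_clause Phi l' l) UP Phi [set l'].
  move/subsetP/(_ m hm); rewrite !inE => /orP[-> // | /bigcupP[l' hl' hm'] _].
  by exists l'.
apply: UP_min; first by rewrite sub1set setU11.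
apply/up_closedP => a a'; rewrite !inE => /orP[/eqP -> hc | /bigcupP[l' hl' ha'] hc].
  by apply/orP; right; apply/bigcupP; exists a => //; apply: mem_UP1.
by apply/orP; right; apply/bigcupP; exists l' => //; apply: UP_step hc.
Qed.

Definition touched U v := ((v, true) \in U) || ((v, false) \in U).

Lemma touched_lit U l : touched U l.1 = (l \in U) || (neg l \in U).
Proof. by case: l => v []; rewrite /touched // orbC. Qed.

Lemma touched_imset U v : touched U v = (v \in [set l.1 | l in U]).
Proof.
apply/orP/imsetP => [[] hv | [[w b] hw ->]]; first by exists (v, true).
  by exists (v, false).
by case: b hw => hw; [left | right].
Qed.

Lemma conflict_var_lit U l : conflict_var U l.1 = (l \in U) && (neg l \in U).
Proof. by case: l => v []; rewrite /conflict_var // andbC. Qed.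

Lemma conflict_var_sub U U' v : U \subset U' -> conflict_var U v -> conflict_var U' v.
Proof. by move=> /subsetP sUU' /andP[ht hf]; rewrite /conflict_var !sUU'. Qed.

Lemma prune_sub Phi : {subset prune Phi <= Phi}.
Proof. by move=> c; rewrite mem_filter => /andP[]. Qed.

Lemma prune_no_conflict Phi c l : c \in prune Phi -> ~~ conflict_clause Phi [set l] c.
Proof. by rewrite mem_filter => /andP[/existsPn]. Qed.

(* If [y] and [~y] both followed from [l], then so would [~l]; the first propagation
   step on the way to [~l] uses a clause [l' \/ ~l] of [G] conflicting for [l]. *)
Lemma UP_prune_no_conflict Phi G l v :
  {subset G <= prune Phi} -> ~~ conflict_var (UP G [set l]) v.
Proof.
move=> sG; apply/negP => /andP[hy hny].
have {}hny : neg (v, true) \in UP G [set l] := hny.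
have hnl : neg l \in UP G [set l].
  by have := UP1_contra hny; rewrite negK; apply: (subsetP (UP1_trans hy)).
have [l' hc hnl'] := UP1_first_step hnl (neg_neq l).
have {}hnl' : neg l' \in UP G [set l] by have := UP1_contra hnl'; rewrite negK.
have hl' : l' \in UP G [set l] := UP_step (mem_UP1 G l) hc.
have sub : UP G [set l] \subset UP Phi [set l].
  by apply: UP_sub_cnf => c /sG /prune_sub.
have conf_l : conflict_var (UP Phi [set l]) l.1.
  by apply: conflict_var_sub sub _; rewrite conflict_var_lit mem_UP1.
have conf_l' : conflict_var (UP Phi [set l]) l'.1.
  by apply: conflict_var_sub sub _; rewrite conflict_var_lit hl'.
case/hasP: hc => c cG hc; have /negP := prune_no_conflict l (sG c cG); apply.
by rewrite /conflict_clause; case/orP: hc => /eqP -> /=; rewrite ?conf_l ?conf_l'.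
Qed.

Definition override U r s : {ffun 'I_n -> bool} :=
  [ffun v => if conflict_var U v then r v
             else if (v, true) \in U then true
             else if (v, false) \in U then false else s v].

Lemma lit_sat_override U r s l :
  lit_sat (override U r s) l =
  if (l \in U) && (neg l \in U) then lit_sat r l
  else if l \in U then true else if neg l \in U then false else lit_sat s l.
Proof.
case: l => v b; rewrite /lit_sat ffunE /conflict_var /=.
by case: b; case: ((v, true) \in U); case: ((v, false) \in U); rewrite //= ?eqbF_neg.
Qed.

Lemma override_untouched U r s v : ~~ touched U v -> override U r s v = s v.
Proof. by rewrite /touched ffunE /conflict_var => /norP[/negbTE -> /negbTE ->]. Qed.

Lemma override_sat G U r s :
  up_closed G U ->
  {in G, forall c, conflict_var U c.1.1 -> conflict_var U c.2.1 -> clause_sat r c} ->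
  {in G, forall c, ~~ touched U c.1.1 -> ~~ touched U c.2.1 -> clause_sat s c} ->
  all (clause_sat (override U r s)) G.
Proof.
move=> /up_closedP closedU sat_r sat_s; apply/allP => -[p q] pqG.
have propag_q : neg p \in U -> q \in U.
  by move=> hp; apply: closedU hp _; apply/hasP; exists (p, q); rewrite ?negK ?eqxx ?orbT.
have propag_p : neg q \in U -> p \in U.
  by move=> hq; apply: closedU hq _; apply/hasP; exists (p, q); rewrite ?negK ?eqxx.
move: (sat_r _ pqG) (sat_s _ pqG) propag_q propag_p.
rewrite /clause_sat /= !lit_sat_override !conflict_var_lit !touched_lit.
case: (p \in U); case: (neg p \in U); case: (q \in U); case: (neg q \in U) => //= hr hs hq hp;
  rewrite ?orbT //; first [by apply: hr | by apply: hs | by move: (hq isT) | by move: (hp isT)].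
Qed.

Lemma sub_prune_sat Phi G : {subset G <= prune Phi} -> exists r, all (clause_sat r) G.
Proof.
have [k] := ubnP (size G); elim: k G => // k IH [|c G] szG sG; first by exists [ffun=> false].
set U := UP (c :: G) [set c.1].
set G' := [seq d <- c :: G | ~~ touched U d.1.1 && ~~ touched U d.2.1].
have szG' : size G' < k.
  rewrite /G' /= touched_lit mem_UP1 /= size_filter.
  exact: leq_ltn_trans (count_size _ G) szG.
have [|r sat_r] := IH G' szG'; first by move=> d; rewrite mem_filter => /andP[_ /sG].
exists (override U r r); apply: override_sat (UP_closed _ _) _ _ => d dG.
  by rewrite (negbTE (UP_prune_no_conflict _ _ sG)).
by move=> u1 u2; apply: (allP sat_r); rewrite mem_filter u1 u2.
Qed.

Lemma prune_sat Phi : exists r, all (clause_sat r) (prune Phi).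
Proof. exact: sub_prune_sat (fun c (h : c \in prune Phi) => h). Qed.

Lemma Zcount_prune_gt0 Phi : 0 < Zcount (prune Phi).
Proof. by have [r sat_r] := prune_sat Phi; apply/card_gt0P; exists r; rewrite inE. Qed.

Lemma Zcount_le_override A B U r :
  up_closed B U -> all (clause_sat r) B ->
  {in B, forall c, ~~ touched U c.1.1 -> ~~ touched U c.2.1 -> c \in A} ->
  Zcount A <= 2 ^ #|U| * Zcount B.
Proof.
move=> closedU /allP sat_r sBA.
set SA := [set s | all (clause_sat s) A]; set SB := [set s | all (clause_sat s) B].
set W := [set l.1 | l in U].
pose code s := (override U r s, [set v in W | s v]).
have code_inj : injective code.
  move=> s1 s2 [/ffunP eq_override /setP eq_W]; apply/ffunP => v.
  have [vW | vW] := boolP (v \in W); first by have := eq_W v; rewrite !inE vW.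
  by have := eq_override v; rewrite !override_untouched ?touched_imset.
have code_sub : code @: SA \subset setX SB (powerset W).
  apply/subsetP => _ /imsetP[s sA ->]; rewrite !inE; apply/andP; split.
    apply: override_sat closedU _ _ => c cB; first by move=> _ _; apply: sat_r.
    by move=> u1 u2; move: sA; rewrite inE => /allP; apply; apply: sBA.
  by apply/subsetP => v; rewrite inE => /andP[].
rewrite /Zcount -/SA -/SB -(card_imset _ code_inj).
apply: leq_trans (subset_leq_card code_sub) _.
rewrite cardsX card_powerset mulnC leq_mul2r leq_pexp2l ?orbT //.
exact: leq_imset_card.
Qed.

Lemma Nclause_closed Phi e : up_closed Phi (Nclause Phi e).
Proof.
apply/up_closedP => l l' /bigcupP[m hm hl'] hc.
by apply/bigcupP; exists m => //; apply: UP_step hl' hc.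
Qed.

Lemma UP1_sub_Nclause Phi e l :
  touched (UP Phi [set l]) e.1.1 || touched (UP Phi [set l]) e.2.1 ->
  UP Phi [set l] \subset Nclause Phi e.
Proof. by move=> he; apply/subsetP => m hm; apply/bigcupP; exists l; rewrite // !inE. Qed.

Lemma mem_Nclause_var Phi e l : l.1 = e.1.1 \/ l.1 = e.2.1 -> l \in Nclause Phi e.
Proof.
move=> hl; apply: (subsetP (UP1_sub_Nclause _)) (mem_UP1 Phi l).
by case: hl => <-; rewrite (touched_lit _ l) mem_UP1 ?orbT.
Qed.

Lemma Nclause_closed_cons Phi e : up_closed (e :: Phi) (Nclause Phi e).
Proof.
apply/up_closedP => l l' hl'; rewrite /has_clause /= => /orP[/orP[] /eqP he | hc].
- by apply: mem_Nclause_var; rewrite he; left.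
- by apply: mem_Nclause_var; rewrite he; right.
exact: (up_closedP _ _ (Nclause_closed Phi e)) hl' hc.
Qed.

(* The clause [e] only propagates from literals on its own variables. *)
Lemma UP1_cons_cases Phi e l :
  UP (e :: Phi) [set l] \subset UP Phi [set l] \/
  UP (e :: Phi) [set l] \subset Nclause Phi e.
Proof.
set U := UP Phi [set l].
have [he | he] := boolP (touched U e.1.1 || touched U e.2.1).
  right; apply: UP_min (Nclause_closed_cons Phi e).
  by rewrite sub1set; apply: (subsetP (UP1_sub_Nclause he)); apply: mem_UP1.
left; apply: UP_min; first by rewrite sub1set mem_UP1.
apply/up_closedP => m m' hm'; rewrite /has_clause /= => /orP[/orP[] /eqP em | hc].
- by case/norP: he => _ /negP[]; rewrite em touched_lit negK hm' orbT.
- by case/norP: he => /negP[]; rewrite em touched_lit negK hm' orbT.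
exact: UP_step hm' hc.
Qed.

Lemma prune_cons_sub Phi e c : c \in prune (e :: Phi) -> c != e -> c \in prune Phi.
Proof.
rewrite !mem_filter in_cons => /andP[/existsPn noconf /orP[/eqP -> | cPhi]];
  first by rewrite eqxx.
move=> _; rewrite cPhi andbT; apply/existsPn => l.
apply: contra (noconf l) => /andP[conf1 conf2].
have sub : UP Phi [set l] \subset UP (e :: Phi) [set l].
  by apply: UP_sub_cnf => d hd; rewrite in_cons hd orbT.
by rewrite /conflict_clause (conflict_var_sub sub conf1) (conflict_var_sub sub conf2).
Qed.

Lemma prune_cons_untouched Phi e c :
  c \in prune Phi -> ~~ touched (Nclause Phi e) c.1.1 -> c \in prune (e :: Phi).
Proof.
move=> cP untouched_c; rewrite mem_filter in_cons (prune_sub cP) orbT andbT.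
apply/existsPn => l; apply/negP => /andP[conf1 conf2].
case: (UP1_cons_cases Phi e l) => sub.
  have /negP := prune_no_conflict l cP; apply.
  by rewrite /conflict_clause (conflict_var_sub sub conf1) (conflict_var_sub sub conf2).
by case/andP: (conflict_var_sub sub conf1) untouched_c => ht _; rewrite /touched ht.
Qed.

Lemma Zcount_prune_le_cons Phi e :
  Zcount (prune Phi) <= 2 ^ #|Nclause Phi e| * Zcount (prune (e :: Phi)).
Proof.
have [r sat_r] := prune_sat (e :: Phi).
apply: Zcount_le_override sat_r _ => [|c cB untouched_c _].
  exact: up_closed_sub (@prune_sub _) (Nclause_closed_cons Phi e).
apply: prune_cons_sub cB _; apply: contraNneq untouched_c => ->.
by rewrite touched_lit mem_Nclause_var //; left.
Qed.

Lemma Zcount_prune_cons_le Phi e :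
  Zcount (prune (e :: Phi)) <= 2 ^ #|Nclause Phi e| * Zcount (prune Phi).
Proof.
have [r sat_r] := prune_sat Phi.
apply: Zcount_le_override sat_r _ => [|c cB untouched_c _].
  exact: up_closed_sub (@prune_sub _) (Nclause_closed Phi e).
exact: prune_cons_untouched.
Qed.

End TwoCNF.

Lemma INR_expn m k : INR (m ^ k) = (INR m ^ k)%R.
Proof. by elim: k => [|k IH] //; rewrite expnS -multE mult_INR IH. Qed.

Lemma ln_le x y : (0 < x)%R -> (x <= y)%R -> (ln x <= ln y)%R.
Proof.
move=> x_gt0 /Rle_lt_or_eq_dec [lt_xy | ->]; last exact: Rle_refl.
exact/Rlt_le/ln_increasing.
Qed.

Lemma ln_le_expn2 a b k : 0 < a -> 0 < b -> a <= 2 ^ k * b ->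
  (ln (INR a) <= INR k * ln 2 + ln (INR b))%R.
Proof.
move=> /ltP/lt_0_INR a_gt0 /ltP/lt_0_INR b_gt0 /leP/le_INR.
have INR2 : INR 2 = 2%R by rewrite /=; lra.
rewrite -multE mult_INR INR_expn INR2 => le_ab.
have pow_gt0 : (0 < 2 ^ k)%R by apply: pow_lt; lra.
rewrite -ln_pow; last lra.
by rewrite -ln_mult //; apply: ln_le.
Qed.

Theorem lemma11p1 (n : nat) (Phi : seq (clause n)) (e : clause n) :
  is2CNF Phi -> wf_clause e ->
  (Rabs (ln (INR (Zcount (prune Phi))) - ln (INR (Zcount (prune (e :: Phi)))))
     <= INR #|Nclause Phi e| * ln 2)%R.
Proof.
move=> _ _.
have le1 := ln_le_expn2 (Zcount_prune_gt0 Phi) (Zcount_prune_gt0 (e :: Phi))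
  (Zcount_prune_le_cons Phi e).
have le2 := ln_le_expn2 (Zcount_prune_gt0 (e :: Phi)) (Zcount_prune_gt0 Phi)
  (Zcount_prune_cons_le Phi e).
apply: Rabs_le; lra.
Qed.
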